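(* Let $\varepsilon,\delta>0$ be constants and let $u_\pm$ be real numbers with $u_->u_+$ and \[ 0<\frac{\delta(u_--u_+)}{2\varepsilon^2}\le\frac14 . \] Let $\tilde u$ be a monotone viscous-dispersive shock of the KdV--Burgers equation $u_t+(u^2/2)_x=\varepsilon u_{xx}-\delta u_{xxx}$ connecting $u_-$ and $u_+$, normalized so that $\tilde u(0)=\frac{u_-+u_+}{2}$. Set $\underline\lambda=\sqrt2-1$ and $\bar\lambda=1$. Then \[ \frac{u_--u_+}{2}e^{-\frac{\bar\lambda(u_--u_+)|x|}{\varepsilon}}\le u_--\tilde u(x)\le\frac{u_--u_+}{2}e^{-\frac{\underline\lambda(u_--u_+)|x|}{2\varepsilon}}\qquad\forall x\le0, \] \[ \frac{u_--u_+}{2}e^{-\frac{\bar\lambda(u_--u_+)|x|}{\varepsilon}}\le \tilde u(x)-u_+\le\frac{u_--u_+}{2}e^{-\frac{\underline\lambda(u_--u_+)|x|}{2\varepsilon}}\qquad\forall x\ge0, \] \[ \frac{\underline\lambda(u_--u_+)^2}{4\varepsilon}e^{-\frac{\bar\lambda(u_--u_+)|x|}{\varepsilon}}\le-\tilde u'(x)\le\frac{\bar\lambda(u_--u_+)^2}{2\varepsilon}e^{-\frac{\underline\lambda(u_--u_+)|x|}{2\varepsilon}}\qquad\forall x\in\mathbb R . \]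
   Context: A viscous-dispersive shock connecting $u_-$ and $u_+$ (with $u_->u_+$) is a smooth function $\tilde u:\mathbb R\to\mathbb R$ such that $\tilde u(x-\sigma t)$ solves $u_t+(u^2/2)_x=\varepsilon u_{xx}-\delta u_{xxx}$, i.e. $-\sigma\tilde u'+(\tilde u^2/2)'=\varepsilon\tilde u''-\delta\tilde u'''$, with $\tilde u(\xi)\to u_\pm$ and $\tilde u'(\xi)\to0$ as $\xi\to\pm\infty$, where $\sigma=\frac{u_-+u_+}{2}$. *)

From Stdlib Require Import Reals.
From Coquelicot Require Import Coquelicot.
Open Scope R_scope.

Definition smooth (f : R -> R) : Prop :=
  forall (n : nat) (x : R), ex_derive (Derive_n f n) x.

Definition monotone (f : R -> R) : Prop :=
  (forall x y, x <= y -> f x <= f y) \/ (forall x y, x <= y -> f y <= f x).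

(* Viscous-dispersive shock of KdV-Burgers u_t + (u^2/2)_x = eps u_xx - delta u_xxx
   connecting um (= u_-) and up (= u_+), with speed sigma = (um+up)/2. *)
Definition vd_shock (eps delta um up : R) (u : R -> R) : Prop :=
  smooth u /\
  (forall xi : R,
     - ((um + up) / 2) * Derive_n u 1 xi + u xi * Derive_n u 1 xi
     = eps * Derive_n u 2 xi - delta * Derive_n u 3 xi) /\
  is_lim u m_infty um /\ is_lim u p_infty up /\
  is_lim (Derive_n u 1) m_infty 0 /\ is_lim (Derive_n u 1) p_infty 0.

From Stdlib Require Import Reals Lra Psatz.
From Coquelicot Require Import Coquelicot.
Open Scope R_scope.

(* Integrating the travelling-wave equation once, with the constant fixed by the state at
   +oo, gives delta u'' = eps u' + Q / 2 where Q = (um - u) (u - up) >= 0 (monotonicity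
   forces u to decrease from um to up).  The flux gap eps (-u') - c Q tends to 0 at both
   ends, so if it had the wrong sign somewhere it would have an interior extremum, and there
   the first integral yields eps (-u') (eps^2 - 2 c delta (u - s)) = eps^2 Q / 2 with
   s = (um + up) / 2.  The smallness condition 4 delta |u - s| <= eps^2 then gives
   c Q <= eps (-u') <= Q for c = sqrt 2 - 1.  Near each end state Q is comparable to the
   distance to that state, so these flux bounds are linear differential inequalities, and
   Gronwall comparison from u(0) = s gives the exponential bounds on u; those on -u' follow
   by putting the bounds on u back into Q. *)

Lemma is_derive_nonneg_le (f df : R -> R) (x y : R) :
  x <= y -> (forall t, is_derive f t (df t)) -> (forall t, x <= t <= y -> 0 <= df t) ->
  f x <= f y.
Proof.
  intros Hxy Hf Hdf.
  destruct (Req_dec x y) as [<-|Hne]; [lra|].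
  destruct (MVT_cor2 f df x y) as [c [Hc Hcxy]];
    [lra | intros c _; apply is_derive_Reals, Hf |].
  assert (0 <= df c) by (apply Hdf; lra).
  nra.
Qed.

Lemma is_derive_0_const (f : R -> R) (x y : R) : (forall t, is_derive f t 0) -> f x = f y.
Proof.
  intro Hf.
  assert (Hmono : forall a b, a < b -> f a = f b).
  { intros a b Hab.
    destruct (MVT_cor2 f (fun _ => 0) a b Hab) as [c [Hc _]];
      [intros c _; apply is_derive_Reals, Hf | lra]. }
  destruct (Rtotal_order x y) as [Hxy|[<-|Hxy]]; [apply Hmono | | symmetry; apply Hmono]; auto.
Qed.

Lemma exp_growth_lower (g dg : R -> R) (k x y : R) :
  x <= y -> (forall t, is_derive g t (dg t)) -> (forall t, x <= t <= y -> k * g t <= dg t) ->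
  g x * exp (k * (y - x)) <= g y.
Proof.
  intros Hxy Hg Hk.
  assert (Hmono : g x * exp (- k * x) <= g y * exp (- k * y)).
  { apply (is_derive_nonneg_le (fun t => g t * exp (- k * t))
                                (fun t => (dg t - k * g t) * exp (- k * t))); [exact Hxy| |].
    - intro t. auto_derive; [exists (dg t); apply Hg|].
      change (fun x => g x) with g. rewrite (is_derive_unique _ _ _ (Hg t)). ring.
    - intros t Ht. apply Rmult_le_pos; [specialize (Hk t Ht); lra | apply Rlt_le, exp_pos]. }
  apply Rmult_le_compat_r with (r := exp (k * y)) in Hmono; [|apply Rlt_le, exp_pos].
  rewrite !Rmult_assoc, <- !exp_plus in Hmono.
  replace (- k * x + k * y) with (k * (y - x)) in Hmono by ring.
  replace (- k * y + k * y) with 0 in Hmono by ring.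
  rewrite exp_0, Rmult_1_r in Hmono. exact Hmono.
Qed.

Lemma exp_growth_upper (g dg : R -> R) (k x y : R) :
  x <= y -> (forall t, is_derive g t (dg t)) -> (forall t, x <= t <= y -> dg t <= k * g t) ->
  g y <= g x * exp (k * (y - x)).
Proof.
  intros Hxy Hg Hk.
  enough (- g x * exp (k * (y - x)) <= - g y) by lra.
  apply (exp_growth_lower (fun t => - g t) (fun t => - dg t)); [exact Hxy| |].
  - intro t. apply (is_derive_opp g), Hg.
  - intros t Ht. specialize (Hk t Ht). lra.
Qed.

Lemma Rmult_exp_le_shift (p q k : R) : p * exp k <= q -> p <= q * exp (- k).
Proof.
  intro H.
  replace p with (p * exp k * exp (- k)) by (rewrite Rmult_assoc, <- exp_plus, Rplus_opp_r, exp_0; ring).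
  apply Rmult_le_compat_r; [apply Rlt_le, exp_pos | exact H].
Qed.

Lemma Rle_mult_exp_shift (p q k : R) : q <= p * exp k -> q * exp (- k) <= p.
Proof.
  intro H.
  replace p with (p * exp k * exp (- k)) by (rewrite Rmult_assoc, <- exp_plus, Rplus_opp_r, exp_0; ring).
  apply Rmult_le_compat_r; [apply Rlt_le, exp_pos | exact H].
Qed.

Lemma decreasing_between_lims (f : R -> R) (lm lp : R) :
  (forall x y, x <= y -> f y <= f x) -> is_lim f m_infty lm -> is_lim f p_infty lp ->
  forall x, lp <= f x <= lm.
Proof.
  intros Hdec Hm Hp x. split.
  - apply (is_lim_le_loc f (fun _ => f x) p_infty lp (f x)); [|exact Hp|apply is_lim_const].
    exists x. intros y Hy. apply Hdec. lra.
  - apply (is_lim_le_loc (fun _ => f x) f m_infty (f x) lm); [|apply is_lim_const|exact Hm].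
    exists x. intros y Hy. apply Hdec. lra.
Qed.

Lemma monotone_lims_decreasing (f : R -> R) (lm lp : R) :
  lp < lm -> monotone f -> is_lim f m_infty lm -> is_lim f p_infty lp ->
  forall x y, x <= y -> f y <= f x.
Proof.
  intros Hlt [Hinc|Hdec] Hm Hp; [exfalso|exact Hdec].
  assert (H := decreasing_between_lims (fun y => - f y) (- lm) (- lp)).
  destruct (H (fun x y Hxy => Ropp_le_contravar _ _ (Hinc x y Hxy))
              (is_lim_opp f m_infty lm Hm) (is_lim_opp f p_infty lp Hp) 0).
  lra.
Qed.

Lemma is_lim_Derive_p_infty_0 (f : R -> R) (l L : R) :
  (forall x, ex_derive f x) -> is_lim f p_infty l -> is_lim (Derive f) p_infty L -> L = 0.
Proof.
  intros Hf Hl HL.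
  destruct (Req_dec L 0) as [|HL0]; [assumption|exfalso].
  assert (He : 0 < Rabs L / 4) by (apply Rabs_pos_lt in HL0; lra).
  apply is_lim_spec in Hl; apply is_lim_spec in HL.
  destruct (Hl (mkposreal _ He)) as [M1 HM1].
  destruct (HL (mkposreal _ He)) as [M2 HM2]. simpl in HM1, HM2.
  set (x := Rmax M1 M2 + 1).
  assert (M1 < x) by (unfold x; generalize (Rmax_l M1 M2); lra).
  assert (M2 < x) by (unfold x; generalize (Rmax_r M1 M2); lra).
  destruct (MVT_cor2 f (Derive f) x (x + 1)) as [c [Hc Hcx]];
    [lra | intros c _; apply is_derive_Reals, Derive_correct, Hf |].
  pose proof (Rabs_def2 _ _ (HM1 x ltac:(lra))).
  pose proof (Rabs_def2 _ _ (HM1 (x + 1) ltac:(lra))).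
  pose proof (Rabs_def2 _ _ (HM2 c ltac:(lra))).
  destruct (Rle_lt_dec 0 L); [rewrite Rabs_right in * by lra | rewrite Rabs_left in * by lra]; lra.
Qed.

Lemma ex_max_critical (F : R -> R) (y0 : R) :
  (forall x, ex_derive F x) -> is_lim F m_infty 0 -> is_lim F p_infty 0 -> 0 < F y0 ->
  exists M, F y0 <= F M /\ Derive F M = 0.
Proof.
  intros HF Hm Hp Hy0.
  apply is_lim_spec in Hm; apply is_lim_spec in Hp.
  destruct (Hm (mkposreal _ Hy0)) as [N1 HN1].
  destruct (Hp (mkposreal _ Hy0)) as [N2 HN2]. simpl in HN1, HN2.
  set (a := Rmin N1 y0 - 1). set (b := Rmax N2 y0 + 1).
  assert (a < N1 /\ a < y0) by (unfold a; generalize (Rmin_l N1 y0) (Rmin_r N1 y0); lra).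
  assert (N2 < b /\ y0 < b) by (unfold b; generalize (Rmax_l N2 y0) (Rmax_r N2 y0); lra).
  assert (Fa : F a < F y0).
  { pose proof (Rle_abs (F a - 0)). pose proof (HN1 a ltac:(lra)). lra. }
  assert (Fb : F b < F y0).
  { pose proof (Rle_abs (F b - 0)). pose proof (HN2 b ltac:(lra)). lra. }
  destruct (continuity_ab_maj F a b) as [M [HM HMab]];
    [lra | intros c _; apply derivable_continuous_pt, ex_derive_Reals_0, HF |].
  assert (FM : F y0 <= F M) by (apply HM; lra).
  exists M. split; [exact FM|].
  assert (a < M) by (destruct HMab as [[? | <-] _]; [assumption | lra]).
  assert (M < b) by (destruct HMab as [_ [? | ->]]; [assumption | lra]).
  rewrite <- (Derive_Reals F M (ex_derive_Reals_0 F M (HF M))).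
  apply (deriv_maximum F a b M); [lra | lra |].
  intros x Hx1 Hx2. apply HM. lra.
Qed.

Lemma critical_flux_le (eps delta w Q X c : R) :
  0 < eps -> 0 <= c <= 1 -> 0 <= Q -> - eps ^ 2 <= 4 * (delta * w) <= eps ^ 2 ->
  X * (eps ^ 2 - 2 * c * (delta * w)) = eps ^ 2 * Q / 2 -> X <= Q.
Proof.
  intros Heps Hc HQ Hw Hcrit.
  assert (Hden : eps ^ 2 / 2 <= eps ^ 2 - 2 * c * (delta * w)) by nra.
  apply Rnot_lt_le; intro HQX.
  assert (0 < (X - Q) * (eps ^ 2 - 2 * c * (delta * w))) by (apply Rmult_lt_0_compat; nra).
  nra.
Qed.

(* [c ^ 2 + 2 * c <= 1] is what the worst case [4 * delta * w = - eps ^ 2] requires;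
   its largest solution is [c = sqrt 2 - 1]. *)
Lemma critical_flux_ge (eps delta w Q X c : R) :
  0 < eps -> 0 <= c -> c ^ 2 + 2 * c <= 1 -> 0 <= Q -> - eps ^ 2 <= 4 * (delta * w) <= eps ^ 2 ->
  X * (eps ^ 2 - 2 * c * (delta * w)) = eps ^ 2 * Q / 2 -> c * Q <= X.
Proof.
  intros Heps Hc0 Hc HQ Hw Hcrit.
  assert (Hden : 0 < eps ^ 2 - 2 * c * (delta * w)) by nra.
  assert (Hnum : c * (eps ^ 2 - 2 * c * (delta * w)) <= eps ^ 2 / 2) by nra.
  apply Rnot_lt_le; intro HXQ.
  assert (0 < (c * Q - X) * (eps ^ 2 - 2 * c * (delta * w))) by (apply Rmult_lt_0_compat; lra).
  nra.
Qed.

Lemma is_lim_gap_product (f : R -> R) (x : Rbar) (a b l : R) :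
  is_lim f x l -> is_lim (fun y => (a - f y) * (f y - b)) x ((a - l) * (l - b)).
Proof.
  intro Hf.
  exact (is_lim_mult _ _ x (a - l) (l - b)
           (is_lim_minus' _ _ x a l (is_lim_const a x) Hf)
           (is_lim_minus' _ _ x l b Hf (is_lim_const b x)) I).
Qed.

Section Shock.

Variables (eps delta um up : R) (u : R -> R).
Hypothesis eps_gt0 : 0 < eps.
Hypothesis delta_gt0 : 0 < delta.
Hypothesis up_lt_um : up < um.
Hypothesis small_dispersion : 2 * delta * (um - up) <= eps ^ 2.
Hypothesis u_shock : vd_shock eps delta um up u.
Hypothesis u_monotone : monotone u.

Let Q (x : R) : R := (um - u x) * (u x - up).

Lemma shock_ex_derive (n : nat) (x : R) : ex_derive (Derive_n u n) x.
Proof. exact (proj1 u_shock n x). Qed.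

Lemma shock_ode (x : R) :
  - ((um + up) / 2) * Derive u x + u x * Derive u x
  = eps * Derive (Derive u) x - delta * Derive (Derive (Derive u)) x.
Proof. exact (proj1 (proj2 u_shock) x). Qed.

Lemma shock_decreasing (x y : R) : x <= y -> u y <= u x.
Proof.
  destruct u_shock as [_ [_ [Hm [Hp _]]]].
  exact (monotone_lims_decreasing u um up up_lt_um u_monotone Hm Hp x y).
Qed.

Lemma shock_range (x : R) : up <= u x <= um.
Proof.
  destruct u_shock as [_ [_ [Hm [Hp _]]]].
  exact (decreasing_between_lims u um up shock_decreasing Hm Hp x).
Qed.

Lemma shock_gap_lim : is_lim Q m_infty 0 /\ is_lim Q p_infty 0.
Proof.
  destruct u_shock as [_ [_ [Hm [Hp _]]]]. split.
  - replace (Finite 0) with (Finite ((um - um) * (um - up))) by (f_equal; ring).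
    exact (is_lim_gap_product u m_infty um up um Hm).
  - replace (Finite 0) with (Finite ((um - up) * (up - up))) by (f_equal; ring).
    exact (is_lim_gap_product u p_infty um up up Hp).
Qed.

Lemma shock_first_integral (x : R) :
  delta * Derive (Derive u) x = eps * Derive u x + Q x / 2.
Proof.
  destruct u_shock as [_ [_ [_ [_ [_ Hd1p]]]]].
  set (Phi := fun y => delta * Derive (Derive u) y - eps * Derive u y - Q y / 2).
  assert (HPhi : forall t, is_derive Phi t 0).
  { intro t. unfold Phi, Q. auto_derive.
    - repeat split;
        first [exact (shock_ex_derive 0 t) | exact (shock_ex_derive 1 t) | exact (shock_ex_derive 2 t)].
    - change (fun y => Derive (Derive u) y) with (Derive (Derive u)).
      change (fun y => Derive u y) with (Derive u).
      change (fun y => u y) with u.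
      pose proof (shock_ode t). lra. }
  set (K := Phi 0).
  assert (HK : forall y, (eps * Derive u y + Q y / 2 + K) / delta = Derive (Derive u) y).
  { intro y. unfold K. rewrite <- (is_derive_0_const Phi y 0 HPhi). unfold Phi. field. lra. }
  assert (Hlim : is_lim (Derive (Derive u)) p_infty ((eps * 0 + 0 / 2 + K) / delta)).
  { apply (is_lim_ext _ _ _ _ HK), (is_lim_scal_r _ (/ delta) _ (eps * 0 + 0 / 2 + K)).
    apply is_lim_plus'; [apply is_lim_plus'|].
    - apply (is_lim_scal_l _ eps _ 0), Hd1p.
    - apply (is_lim_scal_r _ (/ 2) _ 0), shock_gap_lim.
    - apply is_lim_const. }
  assert (HK0 : K = 0).
  { pose proof (is_lim_Derive_p_infty_0 (Derive u) 0 _ (shock_ex_derive 1) Hd1p Hlim) as H.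
    replace K with ((eps * 0 + 0 / 2 + K) / delta * delta) by (field; lra).
    rewrite H. ring. }
  rewrite <- HK, HK0. field. lra.
Qed.

Let F (c x : R) : R := eps * (- Derive u x) - c * Q x.

Lemma shock_flux_is_derive (c x : R) :
  is_derive (F c) x (- eps * Derive (Derive u) x - c * (Derive u x * (um + up - 2 * u x))).
Proof.
  unfold F, Q. auto_derive.
  - repeat split; first [exact (shock_ex_derive 0 x) | exact (shock_ex_derive 1 x)].
  - change (fun y => Derive u y) with (Derive u). change (fun y => u y) with u. ring.
Qed.

Lemma shock_flux_lim (c : R) : is_lim (F c) m_infty 0 /\ is_lim (F c) p_infty 0.
Proof.
  destruct u_shock as [_ [_ [_ [_ [Hd1m Hd1p]]]]].
  destruct shock_gap_lim as [HQm HQp].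
  assert (Hlim : forall z, is_lim (Derive u) z 0 -> is_lim Q z 0 -> is_lim (F c) z 0).
  { intros z Hd HQ.
    replace (Finite 0) with (Finite (eps * - 0 - c * 0)) by (f_equal; ring).
    apply is_lim_minus'.
    - apply (is_lim_scal_l _ eps _ (- 0)), (is_lim_opp _ _ 0), Hd.
    - apply (is_lim_scal_l _ c _ 0), HQ. }
  split; apply Hlim; assumption.
Qed.

Lemma shock_flux_critical (c M : R) : Derive (F c) M = 0 ->
  eps * (- Derive u M) * (eps ^ 2 - 2 * c * (delta * (u M - (um + up) / 2))) = eps ^ 2 * Q M / 2.
Proof.
  rewrite (is_derive_unique _ _ _ (shock_flux_is_derive c M)). intro Hcrit.
  assert (Hd2 : eps * Derive (Derive u) M = c * Derive u M * (2 * u M - um - up)) by lra.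
  transitivity (eps * delta * (eps * Derive (Derive u) M) - eps ^ 3 * Derive u M).
  - rewrite Hd2. field.
  - replace (eps * delta * (eps * Derive (Derive u) M))
      with (eps ^ 2 * (delta * Derive (Derive u) M)) by ring.
    rewrite shock_first_integral. unfold Q. field.
Qed.

Lemma shock_dispersion_bound (x : R) :
  - eps ^ 2 <= 4 * (delta * (u x - (um + up) / 2)) <= eps ^ 2.
Proof. destruct (shock_range x). split; nra. Qed.

Lemma shock_gap_nonneg (x : R) : 0 <= Q x.
Proof. destruct (shock_range x). unfold Q. apply Rmult_le_pos; lra. Qed.

Lemma shock_flux_le (x : R) : eps * (- Derive u x) <= Q x.
Proof.
  apply Rnot_lt_le. intro Hx.
  destruct (ex_max_critical (F 1) x) as [M [HM Hcrit]].
  - intro y. eexists. apply shock_flux_is_derive.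
  - apply shock_flux_lim.
  - apply shock_flux_lim.
  - unfold F. lra.
  - apply shock_flux_critical in Hcrit.
    assert (eps * (- Derive u M) <= Q M).
    { apply (critical_flux_le eps delta (u M - (um + up) / 2) (Q M) _ 1);
        [exact eps_gt0 | lra | apply shock_gap_nonneg | apply shock_dispersion_bound | exact Hcrit]. }
    unfold F in HM. lra.
Qed.

Lemma shock_flux_ge (c x : R) : 0 <= c -> c ^ 2 + 2 * c <= 1 -> c * Q x <= eps * (- Derive u x).
Proof.
  intros Hc0 Hc. apply Rnot_lt_le. intro Hx.
  destruct (shock_flux_lim c) as [HFm HFp].
  apply is_lim_opp in HFm, HFp. simpl in HFm, HFp. rewrite Ropp_0 in HFm, HFp.
  destruct (ex_max_critical (fun y => - F c y) x) as [M [HM Hcrit]];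
    [| exact HFm | exact HFp | unfold F; lra |].
  - intro y. apply (ex_derive_opp (F c)). eexists. apply shock_flux_is_derive.
  - rewrite Derive_opp, <- Ropp_0 in Hcrit. apply Ropp_eq_reg in Hcrit.
    apply shock_flux_critical in Hcrit.
    assert (c * Q M <= eps * (- Derive u M)).
    { apply (critical_flux_ge eps delta (u M - (um + up) / 2) (Q M) _ c);
        [exact eps_gt0 | exact Hc0 | exact Hc | apply shock_gap_nonneg
        | apply shock_dispersion_bound | exact Hcrit]. }
    unfold F in HM. lra.
Qed.

End Shock.

Lemma product_pinch (b lo hi p q : R) :
  0 <= lo -> lo <= p <= hi -> b / 2 <= q <= b -> b / 2 * lo <= p * q <= b * hi.
Proof. intros Hlo Hp Hq. split; nra. Qed.

Section Tails.

Variables (eps c um up : R) (u : R -> R).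
Hypothesis eps_gt0 : 0 < eps.
Hypothesis c_ge0 : 0 <= c.
Hypothesis u_ex_derive : forall x, ex_derive u x.
Hypothesis u_decreasing : forall x y, x <= y -> u y <= u x.
Hypothesis u_range : forall x, up <= u x <= um.
Hypothesis u_centered : u 0 = (um + up) / 2.
Hypothesis u_flux : forall x,
  c * ((um - u x) * (u x - up)) <= eps * (- Derive u x) <= (um - u x) * (u x - up).

Let fast (x : R) : R := (um - up) / 2 * exp (- ((um - up) * Rabs x) / eps).
Let slow (x : R) : R := (um - up) / 2 * exp (- (c * (um - up) * Rabs x) / (2 * eps)).

Lemma flux_rates_left (t : R) : t <= 0 ->
  c * (um - up) / 2 * (um - u t) <= eps * (- Derive u t) <= (um - up) * (um - u t).
Proof.
  intro Ht. destruct (u_flux t), (u_range t).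
  assert (Hmid : (um + up) / 2 <= u t) by (rewrite <- u_centered; apply u_decreasing, Ht).
  split.
  - assert ((um - u t) * ((um - up) / 2) <= (um - u t) * (u t - up)) by (apply Rmult_le_compat_l; lra).
    assert (c * ((um - u t) * ((um - up) / 2)) <= c * ((um - u t) * (u t - up)))
      by (apply Rmult_le_compat_l; lra).
    lra.
  - assert ((um - u t) * (u t - up) <= (um - u t) * (um - up)) by (apply Rmult_le_compat_l; lra).
    lra.
Qed.

Lemma flux_rates_right (t : R) : 0 <= t ->
  c * (um - up) / 2 * (u t - up) <= eps * (- Derive u t) <= (um - up) * (u t - up).
Proof.
  intro Ht. destruct (u_flux t), (u_range t).
  assert (Hmid : u t <= (um + up) / 2) by (rewrite <- u_centered; apply u_decreasing, Ht).
  split.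
  - assert ((um - up) / 2 * (u t - up) <= (um - u t) * (u t - up)) by (apply Rmult_le_compat_r; lra).
    assert (c * ((um - up) / 2 * (u t - up)) <= c * ((um - u t) * (u t - up)))
      by (apply Rmult_le_compat_l; lra).
    lra.
  - assert ((um - u t) * (u t - up) <= (um - up) * (u t - up)) by (apply Rmult_le_compat_r; lra).
    lra.
Qed.

Lemma tail_left (x : R) : x <= 0 -> fast x <= um - u x <= slow x.
Proof.
  intro Hx.
  set (klo := c * (um - up) / (2 * eps)). set (khi := (um - up) / eps).
  assert (Hg : forall t, is_derive (fun y => um - u y) t (- Derive u t)).
  { intro t. auto_derive; [apply u_ex_derive|]. change (fun y => u y) with u. ring. }
  assert (Hrates : forall t, x <= t <= 0 ->
            klo * (um - u t) <= - Derive u t <= khi * (um - u t)).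
  { intros t Ht. destruct (flux_rates_left t (proj2 Ht)).
    unfold klo, khi. split; apply (Rmult_le_reg_l eps); try exact eps_gt0;
      [replace (eps * (c * (um - up) / (2 * eps) * (um - u t))) with (c * (um - up) / 2 * (um - u t))
       | replace (eps * ((um - up) / eps * (um - u t))) with ((um - up) * (um - u t))];
      try (field; lra); lra. }
  pose proof (exp_growth_lower _ _ klo x 0 Hx Hg (fun t Ht => proj1 (Hrates t Ht))) as Hlo.
  pose proof (exp_growth_upper _ _ khi x 0 Hx Hg (fun t Ht => proj2 (Hrates t Ht))) as Hhi.
  simpl in Hlo, Hhi. rewrite u_centered in Hlo, Hhi.
  apply Rmult_exp_le_shift in Hlo. apply Rle_mult_exp_shift in Hhi.
  unfold fast, slow. rewrite Rabs_left1 by exact Hx.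
  replace (- ((um - up) * - x) / eps) with (- (khi * (0 - x))) by (unfold khi; field; lra).
  replace (- (c * (um - up) * - x) / (2 * eps)) with (- (klo * (0 - x))) by (unfold klo; field; lra).
  replace ((um - up) / 2) with (um - (um + up) / 2) by field.
  split; assumption.
Qed.

Lemma tail_right (x : R) : 0 <= x -> fast x <= u x - up <= slow x.
Proof.
  intro Hx.
  set (klo := c * (um - up) / (2 * eps)). set (khi := (um - up) / eps).
  assert (Hg : forall t, is_derive (fun y => u y - up) t (Derive u t)).
  { intro t. auto_derive; [apply u_ex_derive|]. change (fun y => u y) with u. ring. }
  assert (Hrates : forall t, 0 <= t <= x ->
            - khi * (u t - up) <= Derive u t <= - klo * (u t - up)).
  { intros t Ht. destruct (flux_rates_right t (proj1 Ht)).
    unfold klo, khi. split; apply (Rmult_le_reg_l eps); try exact eps_gt0;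
      [replace (eps * (- ((um - up) / eps) * (u t - up))) with (- ((um - up) * (u t - up)))
       | replace (eps * (- (c * (um - up) / (2 * eps)) * (u t - up))) with (- (c * (um - up) / 2 * (u t - up)))];
      try (field; lra); lra. }
  pose proof (exp_growth_lower _ _ (- khi) 0 x Hx Hg (fun t Ht => proj1 (Hrates t Ht))) as Hlo.
  pose proof (exp_growth_upper _ _ (- klo) 0 x Hx Hg (fun t Ht => proj2 (Hrates t Ht))) as Hhi.
  simpl in Hlo, Hhi. rewrite u_centered in Hlo, Hhi.
  unfold fast, slow. rewrite Rabs_right by lra.
  replace (- ((um - up) * x) / eps) with (- khi * (x - 0)) by (unfold khi; field; lra).
  replace (- (c * (um - up) * x) / (2 * eps)) with (- klo * (x - 0)) by (unfold klo; field; lra).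
  replace ((um - up) / 2) with ((um + up) / 2 - up) by field.
  split; assumption.
Qed.

Lemma gap_product_bounds (x : R) :
  (um - up) / 2 * fast x <= (um - u x) * (u x - up) <= (um - up) * slow x.
Proof.
  assert (Hfast : 0 <= fast x).
  { unfold fast. apply Rmult_le_pos; [destruct (u_range 0); lra | apply Rlt_le, exp_pos]. }
  destruct (u_range x).
  destruct (Rle_lt_dec x 0) as [Hx|Hx].
  - assert ((um + up) / 2 <= u x) by (rewrite <- u_centered; apply u_decreasing, Hx).
    apply product_pinch; [exact Hfast | apply tail_left, Hx | lra].
  - assert (u x <= (um + up) / 2) by (rewrite <- u_centered; apply u_decreasing; lra).
    rewrite (Rmult_comm (um - u x)). apply product_pinch; [exact Hfast | apply tail_right; lra | lra].
Qed.

Lemma slope_bounds (x : R) :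
  c * (um - up) ^ 2 / (4 * eps) * exp (- ((um - up) * Rabs x) / eps) <= - Derive u x <=
  (um - up) ^ 2 / (2 * eps) * exp (- (c * (um - up) * Rabs x) / (2 * eps)).
Proof.
  destruct (u_flux x), (gap_product_bounds x).
  split; apply (Rmult_le_reg_l eps); try exact eps_gt0.
  - replace (eps * (c * (um - up) ^ 2 / (4 * eps) * exp (- ((um - up) * Rabs x) / eps)))
      with (c * ((um - up) / 2 * fast x)) by (unfold fast; field; lra).
    apply Rle_trans with (c * ((um - u x) * (u x - up))); [apply Rmult_le_compat_l|]; lra.
  - replace (eps * ((um - up) ^ 2 / (2 * eps) * exp (- (c * (um - up) * Rabs x) / (2 * eps))))
      with ((um - up) * slow x) by (unfold slow; field; lra).
    lra.
Qed.

End Tails.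

Theorem theorem1p2 (eps delta um up : R) (u : R -> R) :
  0 < eps -> 0 < delta -> up < um ->
  0 < delta * (um - up) / (2 * eps ^ 2) <= 1 / 4 ->
  vd_shock eps delta um up u -> monotone u ->
  u 0 = (um + up) / 2 ->
  let lam_lo := sqrt 2 - 1 in
  let lam_hi := 1 in
  (forall x, x <= 0 ->
     (um - up) / 2 * exp (- (lam_hi * (um - up) * Rabs x) / eps) <= um - u x /\
     um - u x <= (um - up) / 2 * exp (- (lam_lo * (um - up) * Rabs x) / (2 * eps))) /\
  (forall x, 0 <= x ->
     (um - up) / 2 * exp (- (lam_hi * (um - up) * Rabs x) / eps) <= u x - up /\
     u x - up <= (um - up) / 2 * exp (- (lam_lo * (um - up) * Rabs x) / (2 * eps))) /\
  (forall x,
     lam_lo * (um - up) ^ 2 / (4 * eps) * exp (- (lam_hi * (um - up) * Rabs x) / eps)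
       <= - Derive u x /\
     - Derive u x <= lam_hi * (um - up) ^ 2 / (2 * eps) * exp (- (lam_lo * (um - up) * Rabs x) / (2 * eps))).
Proof.
  intros Heps Hdelta Hud [_ Hsmall] Hshock Hmono Hu0. cbv zeta. rewrite !Rmult_1_l.
  assert (Hdisp : 2 * delta * (um - up) <= eps ^ 2).
  { apply Rmult_le_compat_r with (r := 2 * eps ^ 2) in Hsmall; [|nra].
    replace (delta * (um - up) / (2 * eps ^ 2) * (2 * eps ^ 2)) with (delta * (um - up)) in Hsmall
      by (field; lra).
    lra. }
  assert (Hsqrt2 : sqrt 2 * sqrt 2 = 2) by (apply sqrt_sqrt; lra).
  assert (Hlam : 0 <= sqrt 2 - 1) by (pose proof (sqrt_pos 2); nra).
  assert (Hflux : forall x, (sqrt 2 - 1) * ((um - u x) * (u x - up)) <= eps * (- Derive u x)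
                         <= (um - u x) * (u x - up)).
  { intro x. split.
    - apply (shock_flux_ge eps delta um up u); auto; nra.
    - apply (shock_flux_le eps delta um up u); auto. }
  pose proof (shock_ex_derive eps delta um up u Hshock 0) as Hu.
  pose proof (shock_decreasing eps delta um up u Hud Hshock Hmono) as Hdec.
  pose proof (shock_range eps delta um up u Hud Hshock Hmono) as Hrange.
  split; [|split].
  - intros x Hx. exact (tail_left eps (sqrt 2 - 1) um up u Heps Hlam Hu Hdec Hrange Hu0 Hflux x Hx).
  - intros x Hx. exact (tail_right eps (sqrt 2 - 1) um up u Heps Hlam Hu Hdec Hrange Hu0 Hflux x Hx).
  - intro x. exact (slope_bounds eps (sqrt 2 - 1) um up u Heps Hlam Hu Hdec Hrange Hu0 Hflux x).
Qed.
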